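(* Let $\mathcal Y=\{1,\dots,n\}$, $c\in(0,1)$ constant, and let $\mathcal H$ and $\mathcal R$ be closed under scaling. Let $\ell$ be a multi-class surrogate loss that is realizable $\mathcal H$-consistent with respect to $\ell_{0-1}$ (for $\mathcal H$ closed under scaling), and let $\Phi$ be non-increasing with $\Phi(t)\ge1_{t\le0}$ for all $t$ and $\lim_{t\to+\infty}\Phi(t)=0$. Let $\hat h$ be a minimizer of $\mathcal E_\ell$ over $\mathcal H$ and $\hat r$ a minimizer of $\mathcal E_{\ell_{\Phi,\hat h}}$ over $\mathcal R$. Then for any $(\mathcal H,\mathcal R)$-realizable distribution, $\mathcal E_{\mathsf L_{\rm abs}}(\hat h,\hat r)=0$.
   Context: $\mathsf h(x)=\arg\max_y h(x,y)$ with fixed tie-breaking; $\ell_{0-1}(h,x,y)=1_{\mathsf h(x)\ne y}$; $\mathsf L_{\rm abs}(h,r,x,y)=1_{\mathsf h(x)\ne y}1_{r(x)>0}+c\,1_{r(x)\le0}$; $\ell_{\Phi,h}(r,x,y)=1_{\mathsf h(x)\ne y}\Phi(-r(x))+c\,\Phi(r(x))$. $\mathcal E$ denotes expected loss and $\mathcal E^*$ its infimum over the relevant set. Closed under scaling: $g\in\mathcal G\Rightarrow\nu g\in\mathcal G$ for all $\nu\in\mathbb R$. A distribution is $(\mathcal H,\mathcal R)$-realizable if some $h^*\in\mathcal H,r^*\in\mathcal R$ have $\mathcal E_{\mathsf L_{\rm abs}}(h^*,r^* )=0$. $\ell$ is realizable $\mathcal H$-consistent w.r.t. $\ell_{0-1}$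 if for every distribution with $\mathcal E^*_{\ell_{0-1}}(\mathcal H)=0$ and every sequence $h_k\in\mathcal H$, $\lim_k\mathcal E_\ell(h_k)=\mathcal E^*_\ell(\mathcal H)$ implies $\lim_k\mathcal E_{\ell_{0-1}}(h_k)=0$. *)

From HB Require Import structures.
From mathcomp Require Import all_boot all_order all_algebra.
From mathcomp Require Import all_classical all_reals all_analysis.
Set Implicit Arguments. Unset Strict Implicit. Unset Printing Implicit Defensive.
Import Order.TTheory GRing.Theory Num.Theory.
Local Open Scope classical_set_scope.
Local Open Scope ring_scope.

(* Label space Y = 'I_n.+1 (n+1 labels), with the discrete sigma-algebra. *)
HB.instance Definition _ (n : nat) := isPointed.Build 'I_n.+1 ord0.
HB.instance Definition _ (n : nat) :=
  @isMeasurable.Build default_measure_display 'I_n.+1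
  discrete_measurable discrete_measurable0
  discrete_measurableC discrete_measurableU.

Section Defs.
Context {d : measure_display} {X : measurableType d} {R : realType} {n : nat}.
Local Notation Y := 'I_n.+1.

Definition hyp := X -> Y -> R.
Definition rej := X -> R.

(* h(x) = argmax_y h(x,y), with the fixed tie-breaking of [arg max] *)
Definition hpred (h : hyp) (x : X) : Y := [arg max_(y > ord0) h x y]%O.

Definition loss01 (h : hyp) (x : X) (y : Y) : R := (hpred h x != y)%:R.

Definition Labs (c : R) (h : hyp) (r : rej) (x : X) (y : Y) : R :=
  (hpred h x != y)%:R * ((0 < r x)%R : bool)%:R + c * ((r x <= 0)%R : bool)%:R.

Definition lossPhi (Phi : R -> R) (c : R) (h : hyp) (r : rej) (x : X) (y : Y)
  : R := (hpred h x != y)%:R * Phi (- r x) + c * Phi (r x).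

Definition Eloss (P : probability (X * Y)%type R) (f : X -> Y -> R) : \bar R :=
  (\int[P]_z (f z.1 z.2)%:E)%E.

Definition Einf (P : probability (X * Y)%type R) (H : set hyp)
  (L : hyp -> X -> Y -> R) : \bar R :=
  ereal_inf [set Eloss P (L h) | h in H].

Definition closed_scaling (G : set rej) : Prop :=
  forall g, G g -> forall nu : R, G (fun x => nu * g x).

Definition closed_scaling2 (G : set hyp) : Prop :=
  forall g, G g -> forall nu : R, G (fun x y => nu * g x y).

Definition realizable_consistent (ell : hyp -> X -> Y -> R) (H : set hyp)
  : Prop :=
  forall P : probability (X * Y)%type R,
    Einf P H loss01 = 0%E ->
    forall hs : nat -> hyp, (forall k, H (hs k)) ->
      ((fun k => Eloss P (ell (hs k))) @ \oo --> Einf P H ell) ->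
      ((fun k => Eloss P (loss01 (hs k))) @ \oo --> 0%E).

Definition realizable (c : R) (P : probability (X * Y)%type R)
  (H : set hyp) (Rs : set rej) : Prop :=
  exists h, exists r, H h /\ Rs r /\ Eloss P (Labs c h r) = 0%E.

End Defs.

From HB Require Import structures.
From mathcomp Require Import all_boot all_order all_algebra.
From mathcomp Require Import all_classical all_reals all_analysis.
From mathcomp Require Import measurable_realfun.
Import Order.TTheory GRing.Theory Num.Theory.
Local Open Scope classical_set_scope.
Local Open Scope ring_scope.

(* Realizability yields h, r with L_abs(h, r) = 0 almost surely, i.e. h classifies
   correctly and r > 0 almost surely (here c > 0 is used).  So the 0-1 loss is
   realizable over H, and realizable consistency applied to the constant sequence
   hhat shows that hhat classifies correctly almost surely as well.  On such points
   the surrogate loss of the rejector k r is c Phi(k r), which tends to 0 where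
   r > 0 and is dominated by c Phi(0); since every k r lies in R, dominated
   convergence makes the optimal surrogate risk of rhat zero.  Finally
   L_abs <= ell_{Phi,hhat} pointwise, because Phi dominates the step 1_{t <= 0}. *)

Set Implicit Arguments. Unset Strict Implicit. Unset Printing Implicit Defensive.

Lemma measurable_fun_discrete d d' (T : measurableType d) (U : measurableType d')
    (f : T -> U) :
  (forall A : set T, measurable A) -> measurable_fun setT f.
Proof. by move=> mT _ B _; exact: mT. Qed.

Section measurable_bool_fun.
Context d (T : measurableType d).
Implicit Types (I : finType).

Lemma measurable_fun_has (I : Type) (p : I -> T -> bool) (s : seq I) :
  (forall i, measurable_fun setT (p i)) ->
  measurable_fun setT (fun x => has (p ^~ x) s).
Proof. by move=> mp; elim: s => [|i s IH] //=; exact: measurable_or. Qed.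

Lemma measurable_fun_all (I : Type) (p : I -> T -> bool) (s : seq I) :
  (forall i, measurable_fun setT (p i)) ->
  measurable_fun setT (fun x => all (p ^~ x) s).
Proof. by move=> mp; elim: s => [|i s IH] //=; exact: measurable_and. Qed.

Lemma measurable_fun_exists I (p : I -> T -> bool) :
  (forall i, measurable_fun setT (p i)) ->
  measurable_fun setT (fun x => [exists i, p i x]).
Proof.
move=> /(measurable_fun_has (enum I)); apply: eq_measurable_fun => x _.
by apply/hasP/existsP => [[i _ pix]|[i pix]]; exists i; rewrite ?mem_enum.
Qed.

Lemma measurable_fun_forall I (p : I -> T -> bool) :
  (forall i, measurable_fun setT (p i)) ->
  measurable_fun setT (fun x => [forall i, p i x]).
Proof.
move=> /(measurable_fun_all (enum I)); apply: eq_measurable_fun => x _.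
by apply/allP/forallP => [pi i|pi i _]; apply: pi; rewrite ?mem_enum.
Qed.

Lemma measurable_fun_ffun I (p : I -> T -> bool) d' (U : measurableType d')
    (G : {ffun I -> bool} -> U) :
  (forall i, measurable_fun setT (p i)) ->
  measurable_fun setT (fun x => G [ffun i => p i x]).
Proof.
move=> mp _ B _; rewrite setTI.
rewrite (_ : _ @^-1` B = \bigcup_(b in G @^-1` B)
    ((fun x => [forall i, p i x == b i]) @^-1` [set true])).
  apply: fin_bigcup_measurable; first exact: finite_finset.
  move=> b _; rewrite -[X in measurable X]setTI.
  have mb : measurable_fun setT (fun x => [forall i, p i x == b i]).
    apply: measurable_fun_forall => i.
    apply: (measurableT_comp (f := fun u => u == b i)) (mp i).
    exact: measurable_fun_discrete.
  exact: mb.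
apply/seteqP; split => x /=.
  move=> GB; exists [ffun i => p i x] => //=.
  by apply/forallP => i; rewrite ffunE.
move=> [b Gb /= /forallP pb]; rewrite (_ : [ffun i => p i x] = b) //.
by apply/ffunP => i; rewrite ffunE; exact/eqP.
Qed.

End measurable_bool_fun.

Lemma measurable_fun_natr d (T : measurableType d) (R : realType) (p : T -> bool) :
  measurable_fun setT p -> measurable_fun setT (fun x => (p x)%:R : R).
Proof.
move=> mp; apply: (measurableT_comp (f := fun b : bool => b%:R : R)) mp.
exact: measurable_fun_discrete.
Qed.

Lemma ge0_integral_eq0P d (T : measurableType d) (R : realType)
    (mu : {measure set T -> \bar R}) (f : T -> R) :
  measurable_fun setT f -> (forall x, 0 <= f x) ->
  (\int[mu]_x (f x)%:E = 0)%E <-> \forall x \ae mu, f x = 0.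
Proof.
move=> mf f_ge0.
have mfE : measurable_fun setT (fun x => (f x)%:E : \bar R).
  exact/measurable_EFinP.
have -> : (\int[mu]_x (f x)%:E = \int[mu]_x `|(f x)%:E|)%E.
  by apply: eq_integral => x _; rewrite gee0_abs // lee_fin.
rewrite (ae_eq_integral_abs mu measurableT mfE); split.
  by apply: filterS => x /(_ I) [].
by apply: filterS => x /= -> _.
Qed.

Lemma ereal_inf_le_cvg (R : realType) (S : set (\bar R)) (u : nat -> \bar R) l :
  (forall k, S (u k)) -> u @ \oo --> l -> (ereal_inf S <= l)%E.
Proof.
move=> Su ul; rewrite -(cvg_lim _ ul) //; apply: lime_ge; first exact: cvgP ul.
by apply: nearW => k; exact: ereal_inf_lbound.
Qed.

Lemma cvg0_comp_scale (R : realType) (Phi : R -> R) (a : R) : 0 < a ->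
  Phi t @[t --> +oo] --> 0 -> (fun k : nat => Phi (k%:R * a)) @ \oo --> 0.
Proof.
move=> a_gt0; apply: cvg_comp; apply/cvgryPge => A.
near=> k; rewrite -ler_pdivrMr //; near: k; exact: nbhs_infty_ger.
Unshelve. all: by end_near. Qed.

Section abstention_losses.
Context d (X : measurableType d) (R : realType) (n : nat).
Local Notation Y := 'I_n.+1.
Implicit Types (h : @hyp d X R n) (r : @rej d X R) (Phi : R -> R) (c : R).

Lemma hpredE h x : hpred h x = odflt ord0 [pick i | [forall j, h x j <= h x i]].
Proof. by []. Qed.

(* With the fixed tie-breaking, [hpred h x] is a function of the finitely many
   events "label i attains the maximum". *)
Lemma measurable_hpred h : (forall y, measurable_fun setT (h ^~ y)) ->
  measurable_fun setT (hpred h).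
Proof.
move=> mh; pose G (b : {ffun Y -> bool}) := odflt ord0 [pick i | b i].
have -> : hpred h = fun x => G [ffun i => [forall j, h x j <= h x i]].
  apply/funext => x; rewrite hpredE /G; congr odflt.
  by apply: eq_pick => i; rewrite ffunE.
apply: measurable_fun_ffun => i; apply: measurable_fun_forall => j.
exact: measurable_fun_ler.
Qed.

Lemma measurable_misclassified h : (forall y, measurable_fun setT (h ^~ y)) ->
  measurable_fun setT (fun z : X * Y => hpred h z.1 != z.2).
Proof.
move=> /measurable_hpred mh.
have -> : (fun z : X * Y => hpred h z.1 != z.2) =
    (fun z => [exists y, (hpred h z.1 == y) && (z.2 != y)]).
  apply/funext => z; apply/idP/existsP => [zE|[y /andP[/eqP ->]]].
    by exists (hpred h z.1); rewrite eqxx eq_sym.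
  by rewrite eq_sym.
apply: measurable_fun_exists => y.
apply: measurable_and.
- apply: (measurableT_comp (f := fun u : Y => u == y)).
    exact: measurable_fun_discrete.
  exact: measurableT_comp mh measurable_fst.
- apply: (measurableT_comp (f := fun u : Y => u != y)) measurable_snd.
  exact: measurable_fun_discrete.
Qed.

Lemma Labs_ge0 c h r x y : 0 <= c -> 0 <= Labs c h r x y.
Proof. by move=> c_ge0; rewrite addr_ge0 ?mulr_ge0. Qed.

Lemma lossPhi_ge0 Phi c h r x y : 0 <= c -> (forall t, 0 <= Phi t) ->
  0 <= lossPhi Phi c h r x y.
Proof. by move=> c_ge0 Phi_ge0; rewrite addr_ge0 ?mulr_ge0. Qed.

Lemma Labs_le_lossPhi Phi c h r x y : 0 <= c ->
  (forall t : R, ((t <= 0)%R : bool)%:R <= Phi t) ->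
  Labs c h r x y <= lossPhi Phi c h r x y.
Proof.
move=> c_ge0 Phi_ge_step; apply: lerD; apply: ler_wpM2l => //.
apply: le_trans (Phi_ge_step _); rewrite oppr_le0.
by case: ltgtP; rewrite ?ler01 ?lexx.
Qed.

Lemma Labs_eq0 c h r x y : 0 < c -> Labs c h r x y = 0 -> hpred h x = y /\ 0 < r x.
Proof.
rewrite /Labs => c_gt0; have [rx|_] := ltP 0 (r x) => /=.
  rewrite mulr1n mulr0n mulr0 addr0 mulr1 => /eqP.
  by rewrite pnatr_eq0 eqb0 negbK => /eqP.
by rewrite mulr1n mulr0n mulr0 add0r mulr1 => c0; move: c_gt0; rewrite c0 ltxx.
Qed.

Lemma lossPhi_correct Phi c h r x y : hpred h x = y ->
  lossPhi Phi c h r x y = c * Phi (r x).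
Proof. by rewrite /lossPhi => ->; rewrite eqxx mul0r add0r. Qed.

Section losses.
Variables (c : R) (h : @hyp d X R n) (r : @rej d X R).
Hypothesis mh : forall y, measurable_fun setT (h ^~ y).
Hypothesis mr : measurable_fun setT r.

Let mr1 : measurable_fun setT (fun z : X * Y => r z.1).
Proof. exact: measurableT_comp mr measurable_fst. Qed.

Lemma measurable_Labs : measurable_fun setT (fun z : X * Y => Labs c h r z.1 z.2).
Proof.
apply: measurable_funD; apply: measurable_funM => //; apply: measurable_fun_natr.
- exact: measurable_misclassified.
- exact: measurable_fun_ltr.
- exact: measurable_fun_ler.
Qed.

Lemma measurable_lossPhi Phi : measurable_fun setT Phi ->
  measurable_fun setT (fun z : X * Y => lossPhi Phi c h r z.1 z.2).
Proof.
move=> mPhi; apply: measurable_funD; apply: measurable_funM => //.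
- by apply: measurable_fun_natr; exact: measurable_misclassified.
- exact: measurableT_comp mPhi (measurable_funN mr1).
- exact: measurableT_comp mPhi mr1.
Qed.

End losses.

Section expected_losses.
Variable P : probability (X * Y)%type R.
Implicit Types f g : X -> Y -> R.

Lemma Eloss_ge0 f : (forall x y, 0 <= f x y) -> (0 <= Eloss P f)%E.
Proof. by move=> f_ge0; apply: integral_ge0 => z _; rewrite lee_fin. Qed.

Lemma le_Eloss f g :
  measurable_fun setT (fun z : X * Y => f z.1 z.2) ->
  measurable_fun setT (fun z : X * Y => g z.1 z.2) ->
  (forall x y, 0 <= f x y) -> (forall x y, f x y <= g x y) ->
  (Eloss P f <= Eloss P g)%E.
Proof.
move=> mf mg f_ge0 fg; apply: ge0_le_integral => //.
- by move=> z _; rewrite lee_fin.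
- exact/measurable_EFinP.
- exact/measurable_EFinP.
- by move=> z _; rewrite lee_fin.
Qed.

Lemma Eloss_eq0P f : measurable_fun setT (fun z : X * Y => f z.1 z.2) ->
  (forall x y, 0 <= f x y) ->
  Eloss P f = 0%E <-> \forall z \ae P, f z.1 z.2 = 0.
Proof. by move=> mf f_ge0; apply: ge0_integral_eq0P. Qed.

Lemma Eloss_loss01_eq0P h : (forall y, measurable_fun setT (h ^~ y)) ->
  Eloss P (loss01 h) = 0%E <-> \forall z \ae P, hpred h z.1 = z.2.
Proof.
move=> mh; rewrite Eloss_eq0P; last by [].
  split; apply: filterS => z; rewrite /loss01; last by move=> ->; rewrite eqxx.
  by move=> /eqP; rewrite pnatr_eq0 eqb0 negbK => /eqP.
by apply: measurable_fun_natr; exact: measurable_misclassified.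
Qed.

Lemma Labs_eq0_ae c h r : 0 < c ->
  (forall y, measurable_fun setT (h ^~ y)) -> measurable_fun setT r ->
  Eloss P (Labs c h r) = 0%E -> \forall z \ae P, hpred h z.1 = z.2 /\ 0 < r z.1.
Proof.
move=> c_gt0 mh mr Labs0.
have [+ _] := Eloss_eq0P (measurable_Labs c mh mr)
  (fun x y => Labs_ge0 h r x y (ltW c_gt0)).
by move=> /(_ Labs0); apply: filterS => z; exact: Labs_eq0.
Qed.

Lemma Einf_eq0 (H : set (@hyp d X R n)) L h : (forall h x y, 0 <= L h x y) ->
  H h -> Eloss P (L h) = 0%E -> Einf P H L = 0%E.
Proof.
move=> L_ge0 Hh Lh0; apply/eqP; rewrite eq_le; apply/andP; split.
  by rewrite -Lh0; apply: ereal_inf_lbound; exists h.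
by apply: le_ereal_inf_tmp => _ [h' _ <-]; exact: Eloss_ge0.
Qed.

Lemma realizable_consistent_minimizer (H : set (@hyp d X R n)) ell hmin :
  realizable_consistent ell H -> Einf P H loss01 = 0%E ->
  H hmin -> Eloss P (ell hmin) = Einf P H ell -> Eloss P (loss01 hmin) = 0%E.
Proof.
move=> ell_cons inf01 Hhmin hmin_opt.
have := ell_cons P inf01 (fun=> hmin) (fun=> Hhmin).
rewrite hmin_opt => /(_ (cvg_cst _)) /(cvg_lim (@ereal_hausdorff R)).
by rewrite lim_cst.
Qed.

Section surrogate.
Variables (Phi : R -> R) (c : R).
Hypothesis c_ge0 : 0 <= c.
Hypothesis Phi_noninc : forall s t, s <= t -> Phi t <= Phi s.
Hypothesis Phi_ge_step : forall t : R, ((t <= 0)%R : bool)%:R <= Phi t.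
Hypothesis Phi_cvg0 : Phi t @[t --> +oo] --> 0.

Let Phi_ge0 t : 0 <= Phi t.
Proof. exact: le_trans (ler0n _ _) (Phi_ge_step t). Qed.

Let mPhi : measurable_fun setT Phi.
Proof. exact: nonincreasing_measurable. Qed.

Lemma Eloss_Labs_le_lossPhi h r :
  (forall y, measurable_fun setT (h ^~ y)) -> measurable_fun setT r ->
  (Eloss P (Labs c h r) <= Eloss P (lossPhi Phi c h r))%E.
Proof.
move=> mh mr; apply: le_Eloss => [||x y|x y].
- exact: measurable_Labs.
- exact: measurable_lossPhi.
- exact: Labs_ge0.
- exact: Labs_le_lossPhi.
Qed.

Lemma Eloss_lossPhi_scale_cvg0 h r :
  (forall y, measurable_fun setT (h ^~ y)) -> measurable_fun setT r ->
  (\forall z \ae P, hpred h z.1 = z.2 /\ 0 < r z.1) ->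
  (fun k : nat => Eloss P (lossPhi Phi c h (fun x => k%:R * r x))) @ \oo --> 0%E.
Proof.
move=> mh mr hr_ae.
have mkr (k : nat) : measurable_fun setT (fun x => k%:R * r x) by exact: measurable_funM.
pose g (k : nat) (z : X * Y) := c * Phi (k%:R * r z.1).
have mg k : measurable_fun setT (fun z => (g k z)%:E).
  apply/measurable_EFinP; apply: measurable_funM => //.
  exact: measurableT_comp mPhi (measurableT_comp (mkr k) measurable_fst).
have -> : (fun k : nat => Eloss P (lossPhi Phi c h (fun x => k%:R * r x))) =
    (fun k => (\int[P]_z (g k z)%:E)%E).
  apply/funext => k; apply: ae_eq_integral => //.
    by apply/measurable_EFinP; exact: measurable_lossPhi.
  by apply: filterS hr_ae => z [hz _] _; rewrite lossPhi_correct.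
have g_cvg0 : \forall z \ae P, setT z -> (fun k => (g k z)%:E) @ \oo --> 0%E.
  apply: filterS hr_ae => z [_ rz] _; apply: cvg_EFin; first exact: nearW.
  by rewrite -(mulr0 c); apply: cvgMl_tmp; exact: cvg0_comp_scale.
have g_bounded : \forall z \ae P, forall k, setT z -> (`|(g k z)%:E| <= (c * Phi 0)%:E)%E.
  apply: filterS hr_ae => z [_ rz] k _; rewrite lee_fin ger0_norm ?mulr_ge0 //.
  by apply: ler_wpM2l => //; apply: Phi_noninc; rewrite mulr_ge0 // ltW.
have [_ _] := dominated_convergence measurableT mg (measurable_cst (0 : \bar R))
  g_cvg0 (finite_measure_integrable_cst P (c * Phi 0) measurableT) g_bounded.
by rewrite integral0.
Qed.

Lemma Eloss_lossPhi_opt_eq0 (Rs : set (@rej d X R)) h r rmin :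
  closed_scaling Rs -> Rs r ->
  (forall y, measurable_fun setT (h ^~ y)) -> measurable_fun setT r ->
  (\forall z \ae P, hpred h z.1 = z.2 /\ 0 < r z.1) ->
  Eloss P (lossPhi Phi c h rmin)
    = ereal_inf [set Eloss P (lossPhi Phi c h r') | r' in Rs] ->
  Eloss P (lossPhi Phi c h rmin) = 0%E.
Proof.
move=> Rs_scale Rsr mh mr hr_ae rmin_opt.
apply/eqP; rewrite eq_le Eloss_ge0 => [|x y]; last exact: lossPhi_ge0.
rewrite andbT rmin_opt; apply: ereal_inf_le_cvg (Eloss_lossPhi_scale_cvg0 mh mr hr_ae).
by move=> k; exists (fun x => k%:R * r x) => //; exact: Rs_scale.
Qed.

End surrogate.
End expected_losses.
End abstention_losses.

Theorem theorem12 (d : measure_display) (X : measurableType d) (R : realType)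
  (n : nat) (c : R) (H : set (@hyp d X R n)) (Rs : set (@rej d X R))
  (ell : @hyp d X R n -> X -> 'I_n.+1 -> R) (Phi : R -> R) :
  0 < c < 1 ->
  closed_scaling2 H -> closed_scaling Rs ->
  (forall h, H h -> forall y : 'I_n.+1, measurable_fun setT (fun x => h x y)) ->
  (forall r, Rs r -> measurable_fun setT r) ->
  (forall h x y, 0 <= ell h x y) ->
  realizable_consistent ell H ->
  (forall s t : R, s <= t -> Phi t <= Phi s) ->
  (forall t : R, ((t <= 0)%R : bool)%:R <= Phi t) ->
  Phi t @[t --> +oo] --> 0 ->
  forall (P : probability (X * 'I_n.+1)%type R)
         (hhat : @hyp d X R n) (rhat : @rej d X R),
  H hhat -> Eloss P (ell hhat) = Einf P H ell ->
  Rs rhat ->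
  Eloss P (lossPhi Phi c hhat rhat)
    = ereal_inf [set Eloss P (lossPhi Phi c hhat r) | r in Rs] ->
  realizable c P H Rs ->
  Eloss P (Labs c hhat rhat) = 0%E.
Proof.
move=> /andP[c_gt0 _] _ Rs_scale mH mRs _ ell_cons Phi_noninc Phi_ge_step Phi_cvg0
  P hhat rhat Hhhat hhat_opt Rsrhat rhat_opt [h [r [Hh [Rsr Labs0]]]].
have hr_ae := Labs_eq0_ae c_gt0 (mH _ Hh) (mRs _ Rsr) Labs0.
have hhat_ae : \forall z \ae P, hpred hhat z.1 = z.2.
  apply/(Eloss_loss01_eq0P _ (mH _ Hhhat)).
  apply: realizable_consistent_minimizer ell_cons _ Hhhat hhat_opt.
  apply: (Einf_eq0 _ Hh) => [h' x y|]; first exact: ler0n.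
  by apply/(Eloss_loss01_eq0P _ (mH _ Hh)); apply: filterS hr_ae => z [].
have hhat_r_ae : \forall z \ae P, hpred hhat z.1 = z.2 /\ 0 < r z.1.
  by apply: filterS2 hhat_ae hr_ae => z ? [].
have c_ge0 := ltW c_gt0.
have lossPhi0 := Eloss_lossPhi_opt_eq0 c_ge0 Phi_noninc Phi_ge_step Phi_cvg0
  Rs_scale Rsr (mH _ Hhhat) (mRs _ Rsr) hhat_r_ae rhat_opt.
apply/eqP; rewrite eq_le Eloss_ge0 => [|x y]; last exact: Labs_ge0.
rewrite andbT -lossPhi0.
by apply: (Eloss_Labs_le_lossPhi P c_ge0 Phi_noninc Phi_ge_step
  (mH _ Hhhat) (mRs _ Rsrhat)).
Qed.
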